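(* Let $R\in\mathcal L(\mathcal H)$, $u,v\in\mathcal H$, $T=R+(\cdot,v)u$, $V\in\mathcal L(\mathcal K)$, and $Y\in\mathcal L(\mathcal K,\mathcal H)$ with $\ker Y=\{0\}$ and $TY=YV$. If $v$ is a cyclic vector for $R^\ast$, then $Y^\ast v$ is a cyclic vector for $V^\ast$.
   Context: $(\cdot,v)u$ denotes $x\mapsto(x,v)u$. A vector $x$ is cyclic for an operator $A$ if the closed linear span of $\{A^nx:n\geq0\}$ is the whole space. *)

From HB Require Import structures.
From mathcomp Require Import all_boot all_order all_algebra.
From mathcomp Require Import all_classical all_reals all_analysis.
From mathcomp Require Import complex.
Set Implicit Arguments. Unset Strict Implicit. Unset Printing Implicit Defensive.
Import Order.TTheory GRing.Theory Num.Theory.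
Import numFieldNormedType.Exports.
Local Open Scope ring_scope.
Local Open Scope classical_set_scope.

Section Hilbert.
Variable R : realType.
Local Notation C := (R[i]).

(* Together with completeness this makes H a complex Hilbert space. *)
Definition hilbert_inner (H : completeNormedModType C) (ip : H -> H -> C) :=
  [/\ forall (a : C) (x y z : H), ip (a *: x + y) z = a * ip x z + ip y z,
      forall x y : H, ip y x = (ip x y)^*
    & forall x : H, `|x| ^+ 2 = ip x x].

Definition bounded_op (H K : completeNormedModType C) (f : H -> K) :=
  linear f /\ continuous f.

Definition is_adjoint (H K : completeNormedModType C)
  (ipH : H -> H -> C) (ipK : K -> K -> C) (T : H -> K) (Ts : K -> H) :=
  forall (x : H) (y : K), ipK (T x) y = ipH x (Ts y).

Definition lin_span (H : completeNormedModType C) (S : set H) : set H :=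
  [set y | exists (n : nat) (c : 'I_n -> C) (w : 'I_n -> H),
           (forall i, S (w i)) /\ y = \sum_(i < n) c i *: w i].

Definition cyclic_vector (H : completeNormedModType C) (A : H -> H) (x : H) :=
  closure (lin_span (range (fun n : nat => iter n A x))) = setT.

End Hilbert.

From HB Require Import structures.
From mathcomp Require Import all_boot all_order all_algebra.
From mathcomp Require Import all_classical all_reals all_analysis.
From mathcomp Require Import complex.
Import Order.TTheory GRing.Theory Num.Theory.
Import numFieldNormedType.Exports.
Local Open Scope ring_scope.
Local Open Scope classical_set_scope.
From mathcomp Require Import ring lra.

(* Let w be orthogonal to every V*^n Y* v.  Then (T^n Y w, v) = (V^n w, Y* v) = 0, so
   the rank-one term (., v) u never acts along the T-orbit of Y w: T^n Y w = R^n Y w,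
   whence (Y w, R*^n v) = 0 for all n.  As v is cyclic for R*, Y w = 0, so w = 0.
   Both steps use that a set spans a dense subspace iff only 0 is orthogonal to it;
   this is where completeness enters, through the projection theorem, obtained by
   minimizing the distance to the span and using the parallelogram law to make
   minimizing sequences Cauchy. *)

Set Implicit Arguments. Unset Strict Implicit. Unset Printing Implicit Defensive.

(* Otherwise [Re] and [Im] resolve to the real and imaginary parts of [Num.Theory]. *)
Local Notation Re := complex.Re.
Local Notation Im := complex.Im.

Section ComplexParts.
Variable R : realType.
Implicit Types (a b : R[i]) (r : R).

Lemma ReD a b : Re (a + b) = Re a + Re b. Proof. by case: a; case: b. Qed.
Lemma ReB a b : Re (a - b) = Re a - Re b. Proof. by case: a; case: b. Qed.
Lemma ReJ a : Re a^* = Re a. Proof. by case: a. Qed.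
Lemma Re_ge0 a : 0 <= a -> 0 <= Re a.
Proof. by rewrite lecE => /andP[]. Qed.

Lemma conj_realC r : (r%:C)%C^* = (r%:C)%C :> R[i].
Proof. by rewrite /Num.conj /= oppr0. Qed.
Lemma mulJc a : a^* * a = (Re a ^+ 2 + Im a ^+ 2)%:C%C.
Proof. by rewrite add_Re2_Im2 sqr_normc mulrC. Qed.

Lemma cvg_Re (T : Type) (F : set_system T) {FF : Filter F}
    (f : T -> R[i]^o) (l : R[i]^o) :
  f @ F --> l -> (fun t => Re (f t)) @ F --> Re l.
Proof.
move/cvgrPdist_lt => f_l; apply/cvgrPdist_lt => e e_gt0.
have := f_l e%:C%C; rewrite ltcR => /(_ e_gt0); apply: filterS => t.
have := normc_ge_Re (l - f t); rewrite ReB ltcE lecE => /andP[_ ReN] /andP[_].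
exact: le_lt_trans.
Qed.

End ComplexParts.

Section LinSpan.
Variables (R : realType) (E : completeNormedModType R[i]) (S : set E).

Lemma lin_span0 : lin_span S 0.
Proof. by exists 0%N, (fun=> 0), (fun=> 0); split; [case | rewrite big_ord0]. Qed.

Lemma sub_lin_span : S `<=` lin_span S.
Proof. by move=> s Ss; exists 1%N, (fun=> 1), (fun=> s); rewrite big_ord1 scale1r. Qed.

Lemma lin_span_linear_closed a x y :
  lin_span S x -> lin_span S y -> lin_span S (a *: x + y).
Proof.
move=> [n1 [c1 [w1 [Sw1 ->]]]] [n2 [c2 [w2 [Sw2 ->]]]].
pose glue T (f1 : 'I_n1 -> T) (f2 : 'I_n2 -> T) (i : 'I_(n1 + n2)) :=
  match fintype.split i with inl j => f1 j | inr j => f2 j end.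
exists (n1 + n2)%N, (glue _ (fun j => a * c1 j) c2), (glue _ w1 w2); split.
  by move=> i; rewrite /glue; case: (fintype.split i).
rewrite big_split_ord scaler_sumr /glue; congr (_ + _); apply: eq_bigr => i _.
  by rewrite (unsplitK (inl i)) scalerA.
by rewrite (unsplitK (inr i)).
Qed.

End LinSpan.

Section InnerProduct.
Variables (R : realType) (E : completeNormedModType R[i]) (ip : E -> E -> R[i]).
Hypothesis ipE : hilbert_inner ip.

Lemma innerDl x y z : ip (x + y) z = ip x z + ip y z.
Proof. by case: ipE => lin _ _; have := lin 1 x y z; rewrite scale1r mul1r. Qed.

Lemma inner0l z : ip 0 z = 0.
Proof. by apply: (addrI (ip 0 z)); rewrite -innerDl !addr0. Qed.

Lemma innerZl a x z : ip (a *: x) z = a * ip x z.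
Proof. by case: ipE => lin _ _; have := lin a x 0 z; rewrite addr0 inner0l addr0. Qed.

Lemma innerNl x z : ip (- x) z = - ip x z.
Proof. by rewrite -scaleN1r innerZl mulN1r. Qed.

Lemma innerBl x y z : ip (x - y) z = ip x z - ip y z.
Proof. by rewrite innerDl innerNl. Qed.

Lemma innerC x y : ip y x = (ip x y)^*.
Proof. by case: ipE. Qed.

Lemma inner_self x : ip x x = `|x| ^+ 2.
Proof. by case: ipE. Qed.

Lemma innerDr x y z : ip x (y + z) = ip x y + ip x z.
Proof. by rewrite [LHS]innerC [ip x y]innerC [ip x z]innerC innerDl rmorphD. Qed.

Lemma innerZr a x z : ip x (a *: z) = a^* * ip x z.
Proof. by rewrite [LHS]innerC [ip x z]innerC innerZl rmorphM. Qed.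

Lemma innerNr x z : ip x (- z) = - ip x z.
Proof. by rewrite [LHS]innerC [ip x z]innerC innerNl rmorphN. Qed.

Lemma innerBr x y z : ip x (y - z) = ip x y - ip x z.
Proof. by rewrite innerDr innerNr. Qed.

Lemma inner_suml n (c : 'I_n -> R[i]) (w : 'I_n -> E) z :
  ip (\sum_(i < n) c i *: w i) z = \sum_(i < n) c i * ip (w i) z.
Proof.
rewrite (big_morph (ip^~ z) (fun x y => innerDl x y z) (inner0l z)).
by apply: eq_bigr => i _; rewrite innerZl.
Qed.

Lemma inner_self_eq0 x : ip x x = 0 -> x = 0.
Proof. by rewrite inner_self => /eqP; rewrite expf_eq0 /= normr_eq0 => /eqP. Qed.

Lemma inner_polarization x z : ip x z = 4^-1 * (`|x + z| ^+ 2 - `|x - z| ^+ 2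
  + 'i * `|x + 'i *: z| ^+ 2 - 'i * `|x - 'i *: z| ^+ 2).
Proof.
have conji : 'i^* = - 'i :> R[i] by exact: conjCi.
have sqri : 'i * 'i = -1 :> R[i] by rewrite -expr2 sqrCi.
rewrite -!inner_self !(innerDl, innerDr, innerNl, innerNr, innerZl, innerZr) conji.
transitivity (ip x z + ('i * 'i + 1) * ((ip z x - ip x z) / 2)).
  by rewrite sqri addNr mul0r addr0.
by field.
Qed.

Lemma inner_continuousl z : continuous (fun x => ip x z : R[i]^o).
Proof.
have sqr_norm_shift (c : E) : continuous (fun x => `|x + c| ^+ 2 : R[i]^o).
  by move=> x; apply: cvgM; apply: cvg_norm; apply: cvgD => //; exact: cvg_cst.
move=> x; rewrite (funext (inner_polarization^~ z)).
apply: cvgMl_tmp; apply: cvgB; last by apply: cvgMl_tmp; exact: sqr_norm_shift.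
apply: cvgD; last by apply: cvgMl_tmp; exact: sqr_norm_shift.
by apply: cvgB; exact: sqr_norm_shift.
Qed.

Lemma closed_orthogonal z : closed [set x | ip x z = 0].
Proof.
have /continuous_closedP/(_ [set 0 : R[i]^o]) := @inner_continuousl z; apply.
exact/accessible_closed_set1/hausdorff_accessible/norm_hausdorff.
Qed.

Lemma inner_self_ge0 x : 0 <= ip x x.
Proof. by rewrite inner_self exprn_ge0. Qed.

(* The norm of [E] is [R[i]]-valued; [sqnorm] is its square as a real number. *)
Definition sqnorm x : R := Re (ip x x).

Lemma sqnormE x : ip x x = (sqnorm x)%:C%C.
Proof. exact/esym/RRe_real/ger0_real/inner_self_ge0. Qed.

Lemma sqnorm_ge0 x : 0 <= sqnorm x.
Proof. exact/Re_ge0/inner_self_ge0. Qed.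

Lemma sqnormD x y : sqnorm (x + y) = sqnorm x + sqnorm y + 2 * Re (ip x y).
Proof. by rewrite /sqnorm innerDl !innerDr [ip y x]innerC !ReD ReJ; ring. Qed.

Lemma sqnormB x y : sqnorm (x - y) = sqnorm x + sqnorm y - 2 * Re (ip x y).
Proof. by rewrite /sqnorm innerBl !innerBr [ip y x]innerC !ReB ReJ; ring. Qed.

Lemma parallelogram x y :
  sqnorm (x + y) + sqnorm (x - y) = 2 * sqnorm x + 2 * sqnorm y.
Proof. by rewrite sqnormD sqnormB; ring. Qed.

Lemma sqnorm_double x : sqnorm (x + x) = 4 * sqnorm x.
Proof. by rewrite sqnormD -[Re (ip x x)]/(sqnorm x); ring. Qed.

(* With t = s (w, y) and s = 1 / (|y|^2 + 1),
   |w - t y|^2 - |w|^2 = - s (2 - s |y|^2) |(w, y)|^2. *)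
Lemma inner_eq0_of_sqnorm_min w y :
  (forall t : R[i], sqnorm w <= sqnorm (w - t *: y)) -> ip w y = 0.
Proof.
move=> w_min; set a := ip w y; set N := Re a ^+ 2 + Im a ^+ 2.
pose s := (sqnorm y + 1)^-1.
have [y_ge0 s_gt0] : 0 <= sqnorm y /\ 0 < s.
  by split; rewrite ?invr_gt0; have := sqnorm_ge0 y; lra.
have sy_lt1 : s * sqnorm y < 1.
  by rewrite mulrC ltr_pdivrMr ?mul1r; lra.
pose t := (s%:C * a)%C.
have tJ : t^* = (s%:C * a^*)%C.
  by rewrite rmorphM; congr (_ * _); exact: conj_realC.
have cross : Re (ip w (t *: y)) = s * N.
  by rewrite innerZr tJ -/a -mulrA mulJc -rmorphM.
have quad : sqnorm (t *: y) = s ^+ 2 * sqnorm y * N.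
  rewrite {1}/sqnorm innerZl innerZr tJ sqnormE /t.
  have -> : (s%:C * a * (s%:C * a^* * (sqnorm y)%:C))%C =
            ((s ^+ 2 * sqnorm y)%:C * (a^* * a))%C.
    by rewrite rmorphM rmorphXn; ring.
  by rewrite mulJc -rmorphM.
have := w_min t; rewrite sqnormB quad cross => ineq.
have N_ge0 : 0 <= N by rewrite /N addr_ge0 // sqr_ge0.
have coef_gt0 : 0 < s * (2 - s * sqnorm y) by apply: mulr_gt0; lra.
have : s * (2 - s * sqnorm y) * N <= 0 by nra.
rewrite pmulr_rle0 // => N_le0.
have [Re0 Im0] : Re a = 0 /\ Im a = 0 by rewrite /N in N_ge0 N_le0; split; nra.
by move: Re0 Im0; case: (a) => ? ? /= -> ->.
Qed.

Lemma cvg_sqnorm (T : Type) (F : set_system T) {FF : Filter F}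
    (f : T -> E) (l : E) :
  f @ F --> l -> (fun t => sqnorm (f t)) @ F --> sqnorm l.
Proof.
move=> f_l; rewrite /sqnorm inner_self; under eq_fun do rewrite inner_self.
by apply: cvg_Re; apply: cvgM; exact: cvg_norm.
Qed.

Lemma norm_lt_sqnorm x r : 0 < r -> sqnorm x < r ^+ 2 -> `|x| < r%:C%C.
Proof.
have nx_ge0 := normr_ge0 x.
rewrite /sqnorm inner_self -(RRe_real (ger0_real nx_ge0)) -rmorphXn ltcR /=.
have := Re_ge0 nx_ge0; nra.
Qed.

Lemma sqnorm_sub_near_inf x d a b ea eb :
  d <= sqnorm (x - 2^-1 *: (a + b)) ->
  sqnorm (x - a) <= d + ea -> sqnorm (x - b) <= d + eb ->
  sqnorm (b - a) <= 2 * ea + 2 * eb.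
Proof.
set c := x - 2^-1 *: (a + b) => d_le xa_le xb_le.
have halves : 2^-1 *: (a + b) + 2^-1 *: (a + b) = a + b.
  by rewrite -scalerDl (_ : 2^-1 + 2^-1 = 1 :> R[i]) ?scale1r //; field.
have sum_eq : (x - a) + (x - b) = c + c.
  by rewrite addrACA -opprD /c addrACA -opprD halves.
have diff_eq : (x - a) - (x - b) = b - a by rewrite opprB addrC addrA subrK.
have := parallelogram (x - a) (x - b); rewrite sum_eq diff_eq sqnorm_double; lra.
Qed.

Section Projection.
Variable L : set E.
Hypotheses (L0 : L 0) (L_comb : forall a x y, L x -> L y -> L (a *: x + y)).

Lemma L_midpoint a b : L a -> L b -> L (2^-1 *: (a + b)).
Proof.
move=> La Lb; rewrite -[_ *: _]addr0; apply: L_comb L0.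
by rewrite -[a]scale1r; exact: L_comb.
Qed.

Lemma minimizing_seq_cvg x d (m_ : nat -> E) :
  (forall m, L m -> d <= sqnorm (x - m)) ->
  (forall n, L (m_ n) /\ sqnorm (x - m_ n) <= d + n.+1%:R^-1) -> cvg (m_ @ \oo).
Proof.
move=> d_lb m_min.
have m_close n k : sqnorm (m_ k - m_ n) <= 2 * n.+1%:R^-1 + 2 * k.+1%:R^-1.
  have [[Ln xn] [Lk xk]] := (m_min n, m_min k).
  exact: sqnorm_sub_near_inf (d_lb _ (L_midpoint Ln Lk)) xn xk.
apply: cauchy_cvg; apply: cauchy_exP => e e_gt0.
have e_real : e = (Re e)%:C%C by rewrite RRe_real // gtr0_real.
have r_gt0 : 0 < Re e ^+ 2 / 4.
  by rewrite divr_gt0 // exprn_gt0 //; move: e_gt0; rewrite ltcE => /andP[].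
have [N _ /(_ N (leqnn N)) N_small] := near_infty_natSinv_lt (PosNum r_gt0).
exists (m_ N); apply: filterS (nbhs_infty_ge N) => n le_Nn.
rewrite -ball_normE /= e_real.
apply: norm_lt_sqnorm; first by move: e_gt0; rewrite ltcE => /andP[].
apply: le_lt_trans (m_close n N) _.
have : n.+1%:R^-1 <= N.+1%:R^-1 :> R.
  by rewrite lef_pV2 ?posrE ?ltr0n // ler_nat ltnS.
move: N_small; move: (n.+1%:R^-1) (N.+1%:R^-1) => p q /=; lra.
Qed.

Theorem orthogonal_projection x :
  exists2 m, closure L m & forall y, L y -> ip (x - m) y = 0.
Proof.
pose S := [set sqnorm (x - m) | m in L].
have S_inf : has_inf S.
  split; first by exists (sqnorm (x - 0)), 0.
  by exists 0 => _ [m _ <-]; exact: sqnorm_ge0.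
set d := inf S.
have d_lb m : L m -> d <= sqnorm (x - m).
  by move=> Lm; apply: ge_inf S_inf.2 _ _; exists m.
have m_min n : exists m, L m /\ sqnorm (x - m) <= d + n.+1%:R^-1.
  have n_gt0 : 0 < n.+1%:R^-1 :> R by rewrite invr_gt0 ltr0n.
  by have [_ [m Lm <-] /ltW] := inf_adherent n_gt0 S_inf; exists m.
have [m_ m_minP] := choice m_min.
have /cvg_ex[m m_to] := minimizing_seq_cvg d_lb m_minP.
have Lm : closure L m.
  apply: closed_cvg m_to; first exact: closed_closure.
  by apply: nearW => n; apply: subset_closure; exact: (m_minP n).1.
have xm_le : sqnorm (x - m) <= d.
  have xm_to : (fun n => x - m_ n) @ \oo --> x - m.
    by apply: cvgB => //; exact: cvg_cst.
  have d_to : (fun n => d + harmonic n) @ \oo --> d + 0.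
    by apply: cvgD; [exact: cvg_cst | exact: cvg_harmonic].
  rewrite -[d]addr0; apply: (ler_cvg_to (cvg_sqnorm xm_to) d_to).
  by apply: nearW => n; exact: (m_minP n).2.
exists m => // y Ly; apply: inner_eq0_of_sqnorm_min => t; apply: le_trans xm_le _.
have -> : x - m - t *: y = x - (t *: y + m) by rewrite opprD addrA addrAC.
have shifted_to : (fun n => x - (t *: y + m_ n)) @ \oo --> x - (t *: y + m).
  by apply: cvgB; [exact: cvg_cst | apply: cvgD => //; exact: cvg_cst].
apply: (ler_cvg_to (cvg_cst d) (cvg_sqnorm shifted_to)).
by apply: nearW => n; apply: d_lb; apply: L_comb => //; exact: (m_minP n).1.
Qed.

End Projection.

Lemma dense_lin_spanP (S : set E) :
  closure (lin_span S) = setT <-> forall z, (forall s, S s -> ip z s = 0) -> z = 0.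
Proof.
split=> [dense z z_perp | S_perp_trivial].
  apply: inner_self_eq0.
  have span_perp : lin_span S `<=` [set x | ip x z = 0].
    move=> _ [n [c [w [Sw ->]]]]; rewrite /= inner_suml big1 // => i _.
    by rewrite innerC z_perp // conjC0 mulr0.
  have : closure (lin_span S) z by rewrite dense.
  by move/(closureS span_perp); rewrite -(closure_id _).1 //; exact: closed_orthogonal.
apply/seteqP; split=> // x _.
have [m m_cl m_perp] :=
  orthogonal_projection (lin_span0 S) (@lin_span_linear_closed _ _ S) x.
suff /eqP : x - m = 0 by rewrite subr_eq0 => /eqP ->.
by apply: S_perp_trivial => s /sub_lin_span; exact: m_perp.
Qed.

Lemma cyclic_vectorP (A : E -> E) x :
  cyclic_vector A x <-> forall z, (forall n, ip z (iter n A x) = 0) -> z = 0.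
Proof.
rewrite /cyclic_vector dense_lin_spanP.
split=> perp_trivial z z_perp; apply: perp_trivial.
  by move=> _ [n _ <-]; exact: z_perp.
by move=> n; apply: z_perp; exists n.
Qed.

Lemma iter_adjoint (A As : E -> E) : is_adjoint ip ip A As ->
  forall n x y, ip (iter n A x) y = ip x (iter n As y).
Proof. by move=> adj; elim=> [//|n IHn] x y; rewrite iterSr IHn adj. Qed.

Lemma iter_rank_one_perturbation (A T : E -> E) u v x :
  (forall y, T y = A y + ip y v *: u) -> (forall n, ip (iter n T x) v = 0) ->
  forall n, iter n T x = iter n A x.
Proof.
move=> defT Tx_perp; elim=> [//|n IHn].
by rewrite !iterS defT Tx_perp scale0r addr0 IHn.
Qed.

End InnerProduct.

Lemma iter_morph (aT rT : Type) (f : aT -> rT) (g : aT -> aT) (h : rT -> rT) :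
  {morph f : x / g x >-> h x} -> forall n, {morph f : x / iter n g x >-> iter n h x}.
Proof. by move=> fgh; elim=> [//|n IHn] x; rewrite !iterS fgh IHn. Qed.

Unset Implicit Arguments.

Theorem corollary7p8 (R : realType)
  (H K : completeNormedModType R[i])
  (ipH : H -> H -> R[i]) (ipK : K -> K -> R[i])
  (hH : hilbert_inner ipH) (hK : hilbert_inner ipK)
  (Rop : H -> H) (Rs : H -> H) (u v : H)
  (Vop : K -> K) (Vs : K -> K)
  (Y : K -> H) (Ys : H -> K)
  (hR : bounded_op Rop) (hRs : is_adjoint ipH ipH Rop Rs)
  (hV : bounded_op Vop) (hVs : is_adjoint ipK ipK Vop Vs)
  (hY : bounded_op Y) (hYs : is_adjoint ipK ipH Y Ys)
  (T : H -> H) (hT : forall x, T x = Rop x + ipH x v *: u)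
  (kerY : forall x : K, Y x = 0 -> x = 0)
  (TYYV : forall x : K, T (Y x) = Y (Vop x)) :
  cyclic_vector Rs v -> cyclic_vector Vs (Ys v).
Proof.
move=> /(cyclic_vectorP hH) Rs_cyclic; apply/(cyclic_vectorP hK) => w w_perp.
have Y_morph : {morph Y : x / Vop x >-> T x} by move=> x; rewrite TYYV.
have TYw_perp n : ipH (iter n T (Y w)) v = 0.
  by rewrite -(iter_morph Y_morph) hYs (iter_adjoint hVs) w_perp.
have TYw_eq := iter_rank_one_perturbation hT TYw_perp.
apply/kerY/Rs_cyclic => n.
by rewrite -(iter_adjoint hRs) -TYw_eq TYw_perp.
Qed.
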